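(* Let $\sigma:S\to\{\bullet\}$ be the map from the Sierpinski space $S=\{o,c\}$ (open sets $\emptyset,\{o\},\{o,c\}$) to the one-point space. Then $\{\sigma\}^r$ (in $\mathrm{Top}$) is the class of continuous maps $p:X\to Y$ such that every fibre $p^{-1}(y)$, $y\in Y$, with the subspace topology, satisfies the separation axiom $T_1$.
   Context: For continuous maps $f:A\to B$, $g:C\to D$, $f\pitchfork g$ means: for all continuous $t:A\to C$, $b:B\to D$ with $g\circ t=b\circ f$ there is continuous $d:B\to C$ with $d\circ f=t$, $g\circ d=b$. For a class $P$, $P^r=\{g: f\pitchfork g\ \forall f\in P\}$. *)

From HB Require Import structures.
From mathcomp Require Import all_boot all_order all_algebra.
From mathcomp Require Import all_classical all_reals all_analysis.
Set Implicit Arguments. Unset Strict Implicit. Unset Printing Implicit Defensive.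
Local Open Scope classical_set_scope.

Definition lifting_property (A B C D : topologicalType)
  (f : A -> B) (g : C -> D) : Prop :=
  forall (t : A -> C) (b : B -> D), continuous t -> continuous b ->
    g \o t = b \o f ->
    exists d : B -> C, [/\ continuous d, d \o f = t & g \o d = b].

Definition sierpinski : Type := bool.
HB.instance Definition _ := Choice.on sierpinski.
Definition s_o : sierpinski := true.
Definition s_c : sierpinski := false.

Definition sierpinski_open (A : set sierpinski) : Prop :=
  A = set0 \/ A = [set s_o] \/ A = setT.

Lemma sierpinski_openE (A : set sierpinski) :
  sierpinski_open A <-> (A s_c -> A s_o).
Proof.
split.
  by case=> [->|[->|->]] //.
move=> H; case: (pselect (A s_o)) => Ho; case: (pselect (A s_c)) => Hc.
- right; right; apply/seteqP; split => // -[] _ //.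
- right; left; apply/seteqP; split.
    by case=> // /Hc.
  by move=> x /= ->.
- by exfalso; exact: Ho (H Hc).
- left; apply/seteqP; split => // -[] //.
Qed.

Lemma sierpinski_opT : sierpinski_open setT.
Proof. by right; right. Qed.

Lemma sierpinski_opI : setI_closed sierpinski_open.
Proof.
move=> A B /sierpinski_openE HA /sierpinski_openE HB.
by apply/sierpinski_openE => -[/HA ? /HB ?].
Qed.

Lemma sierpinski_op_bigU (I : Type) (f : I -> set sierpinski) :
  (forall i, sierpinski_open (f i)) -> sierpinski_open (\bigcup_i f i).
Proof.
move=> Hf; apply/sierpinski_openE => -[i _ Hi].
by exists i => //; apply/(sierpinski_openE (f i)).1.
Qed.

HB.instance Definition _ := isOpenTopological.Build sierpinski
  sierpinski_opT sierpinski_opI sierpinski_op_bigU.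

Definition point_space : Type := discrete_topology unit.

Definition sigma_map : sierpinski -> point_space := fun _ => tt.

From HB Require Import structures.
From mathcomp Require Import all_boot all_order all_algebra.
From mathcomp Require Import all_classical all_reals all_analysis.
Local Open Scope classical_set_scope.

(* A continuous map t from the Sierpinski space is exactly a pair of points
   with t c in the closure of {t o}.  A square from sigma to p is such a pair
   inside one fibre of p, and it has a diagonal filler iff t is constant, i.e.
   iff t o = t c.  So sigma lifts against p iff no fibre contains two distinct
   points one of which lies in the closure of the other; since the opens of a
   fibre are the traces of the opens of X, this is the T1 axiom for fibres. *)

Lemma closure_set1P (T : topologicalType) (x y : T) :
  closure [set x] y <-> forall V : set T, open V -> V y -> V x.
Proof.
rewrite closureEonbhs; split => [clxy V oV Vy | xV A B Ax [oB By]].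
  by have [z [-> Vz]] := clxy [set x] V (fun z => id) (conj oV Vy).
by exists x; split; [exact: Ax | exact: xV].
Qed.

Lemma sierpinski_continuousP (T : topologicalType) (t : sierpinski -> T) :
  continuous t <-> closure [set t s_o] (t s_c).
Proof.
rewrite closure_set1P; split => [/continuousP ct V oV | tV].
  exact/(sierpinski_openE (t @^-1` V)).1/ct.
by apply/continuousP => V oV; apply/sierpinski_openE; exact: tV.
Qed.

Lemma lifting_sigmaP (X Y : topologicalType) (p : X -> Y) :
  lifting_property sigma_map p <->
  forall x x' : X, p x = p x' -> closure [set x] x' -> x = x'.
Proof.
split => [lift x x' pxx' clxx' | closure_eq t b ct cb tb].
  pose t (s : sierpinski) := if s then x else x'.
  have ct : continuous t by exact/sierpinski_continuousP.
  have tb : p \o t = cst (p x) \o sigma_map by apply: funext => -[].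
  have [d [_ dt _]] := lift t _ ct (@cst_continuous _ _ (p x)) tb.
  by rewrite -[x]/(t s_o) -[x']/(t s_c) -dt.
have tb_at s : p (t s) = b tt by have := congr1 (@^~ s) tb.
have toc : t s_o = t s_c.
  by apply: closure_eq; [rewrite !tb_at | exact/sierpinski_continuousP].
exists (cst (t s_o)); split.
- exact: cst_continuous.
- by apply: funext => -[] //; exact: toc.
- by apply: funext => -[]; exact: tb_at.
Qed.

Lemma accessible_set_typeP (X : topologicalType) (A : set X) :
  accessible_space (set_type A) <->
  forall x x' : X, A x -> A x' -> closure [set x] x' -> x = x'.
Proof.
split => [T1 x x' Ax Ax' /closure_set1P clxx' | closure_eq a a' neq_aa'].
  apply: contrapT => neq_xx'.
  pose a : set_type A := exist _ x (mem_set Ax).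
  pose a' : set_type A := exist _ x' (mem_set Ax').
  have /T1 [_ [[V oV <-]]] : a' != a by apply/eqP => -[/esym].
  by rewrite !inE /= => /(clxx' V oV).
apply: contrapT => no_sep; move/eqP: neq_aa'; apply; apply: val_inj; symmetry.
apply: closure_eq; [exact/set_mem/valP | exact/set_mem/valP |].
apply/closure_set1P => V oV Va; apply: contrapT => Va'; apply: no_sep.
by exists (set_val @^-1` V); rewrite !inE; split => //; exists V.
Qed.

Theorem mainTheorem5 (X Y : topologicalType) (p : X -> Y) :
  continuous p ->
  (lifting_property sigma_map p <->
   forall y : Y, @accessible_space (set_type (p @^-1` [set y]))).
Proof.
move=> _; rewrite lifting_sigmaP; split => [closure_eq y | T1 x x' pxx'].
  apply/accessible_set_typeP => x x' /= px px'.
  by apply: closure_eq; rewrite px px'.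
have /accessible_set_typeP fibre_eq := T1 (p x).
exact: fibre_eq (erefl _) (esym pxx').
Qed.
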